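(* Consider the single-armed lazy restless bandit described in the context with $p_{0,0}>p_{1,0}$ (positively correlated arm), fixed subsidy $\eta$ and $\beta\in(0,1)$. Then $V(\pi)$, $V_S(\pi)$ and $V_{NS}(\pi)$ are decreasing in $\pi\in[0,1]$.
   Context: Single-armed lazy restless bandit: an arm has a hidden state in $\{0,1\}$ evolving as a two-state Markov chain with transition probabilities $p_{i,j}$ ($p_{i,0}+p_{i,1}=1$). During each session the chain makes exactly $K\ge1$ transitions. In each session the decision maker plays the arm or not. If played with the arm in state $i$ at session start, an ACK is received with probability $\rho_i\in[0,1]$ and the expected reward is $R_i$; if not played, subsidy $\eta$ is received and nothing observed. Standing assumptions: $\rho_0<\rho_1$, $R_0<R_1$. Belief $\pi\in[0,1]$ = probability of state $0$. $R_S(\pi)=\pi R_0+(1-\pi)R_1$, $\rho(\pi)=\pi\rho_0+(1-\pi)\rho_1$, $\gamma_1(\pi)=\frac{(1-\pi)\rho_1p_{1,0}+\pi\rho_0p_{0,0}}{\rho_1(1-\pi)+\rho_0\pi}$, $\gamma_0(\pi)=\frac{(1-\pi)(1-\rho_1)p_{1,0}+\pi(1-\rho_0)p_{0,0}}{(1-\rho_1)(1-\pi)+(1-\rho_0)\pi}$, $\gamma_2(\pi)=(p_{0,0}-p_{1,0})^K\pi+p_{1,0}\sum_{j=0}^{K-1}(p_{0,0}-p_{1,0})^j$. $V_S,V_{NS},V$ are the unique bounded solution of $V_S(\pi)=R_S(\pi)+\beta\big(\rho(\pi)V(\gamma_1(\pi))+(1-\rho(\pi))V(\gamma_0(\pi))\big)$,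 $V_{NS}(\pi)=\eta+\beta V(\gamma_2(\pi))$, $V(\pi)=\max\{V_S(\pi),V_{NS}(\pi)\}$ (a term with zero coefficient is taken to be $0$). *)

From Stdlib Require Import Reals Lra.
Open Scope R_scope.

(* Parameters of the arm: p00 = p_{0,0}, p10 = p_{1,0}
   (so p_{0,1} = 1 - p00, p_{1,1} = 1 - p10), rho0, rho1, R0, R1. *)

Definition RS (R0 R1 pi : R) : R := pi * R0 + (1 - pi) * R1.

Definition rhoB (rho0 rho1 pi : R) : R := pi * rho0 + (1 - pi) * rho1.

Definition gamma1 (p00 p10 rho0 rho1 pi : R) : R :=
  ((1 - pi) * rho1 * p10 + pi * rho0 * p00) / (rho1 * (1 - pi) + rho0 * pi).

Definition gamma0 (p00 p10 rho0 rho1 pi : R) : R :=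
  ((1 - pi) * (1 - rho1) * p10 + pi * (1 - rho0) * p00)
  / ((1 - rho1) * (1 - pi) + (1 - rho0) * pi).

(* K transitions per session:
   gamma2 pi = (p00-p10)^K pi + p10 * sum_{j=0}^{K-1} (p00-p10)^j *)
Definition gamma2 (K : nat) (p00 p10 pi : R) : R :=
  (p00 - p10) ^ K * pi + p10 * sum_f_R0 (fun j => (p00 - p10) ^ j) (K - 1).

Definition bounded01 (f : R -> R) : Prop :=
  exists M : R, forall pi, 0 <= pi <= 1 -> Rabs (f pi) <= M.

(* A term with zero coefficient is 0 automatically, since it is multiplied
   by that zero coefficient (and Rdiv by 0 is some real number). *)
Definition bellman_solution (K : nat) (p00 p10 rho0 rho1 R0 R1 eta beta : R)
    (VS VNS V : R -> R) : Prop :=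
  bounded01 VS /\ bounded01 VNS /\ bounded01 V /\
  forall pi, 0 <= pi <= 1 ->
    VS pi = RS R0 R1 pi
            + beta * (rhoB rho0 rho1 pi * V (gamma1 p00 p10 rho0 rho1 pi)
                      + (1 - rhoB rho0 rho1 pi) * V (gamma0 p00 p10 rho0 rho1 pi))
    /\ VNS pi = eta + beta * V (gamma2 K p00 p10 pi)
    /\ V pi = Rmax (VS pi) (VNS pi).

(* "decreasing" on [0,1], read as non-increasing *)
Definition nonincreasing01 (f : R -> R) : Prop :=
  forall x y, 0 <= x -> x <= y -> y <= 1 -> f y <= f x.

(* Let m be the supremum of the rises V y - V x over 0 <= x <= y <= 1, finite
   since V is bounded.  The stage reward is nonincreasing in the belief.  After
   a play the next belief is the one-step prediction of the Bayesian posterior,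
   and coupling the ACK/NACK outcomes at x and at y shows that the expected
   continuation value rises by at most m; without a play the next belief is the
   K-step prediction, which is nondecreasing.  So VS, VNS and V = max VS VNS
   rise by at most beta m, whence m <= beta m and m = 0. *)

From Stdlib Require Import Reals Lra Lia.
Open Scope R_scope.

Definition rise_bounded01 (f : R -> R) (m : R) : Prop :=
  forall x y, 0 <= x -> x <= y -> y <= 1 -> f y - f x <= m.

Lemma nonincreasing01_iff_rise0 (f : R -> R) :
  nonincreasing01 f <-> rise_bounded01 f 0.
Proof.
  split; intros Hf x y Hx Hxy Hy; specialize (Hf x y Hx Hxy Hy); lra.
Qed.

Lemma rise_bounded01_least (f : R -> R) :
  bounded01 f ->
  exists m, 0 <= m /\ rise_bounded01 f m /\
            forall m', rise_bounded01 f m' -> m <= m'.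
Proof.
  intros [M HM].
  set (rises := fun d => exists x y, 0 <= x /\ x <= y /\ y <= 1 /\ d = f y - f x).
  destruct (completeness rises) as [m [Hub Hlub]].
  - exists (2 * M); intros d (x & y & Hx & Hxy & Hy & ->).
    pose proof (HM x ltac:(lra)) as Hfx; pose proof (HM y ltac:(lra)) as Hfy.
    pose proof (Rle_abs (f y)); pose proof (Rle_abs (- f x)).
    rewrite Rabs_Ropp in *; lra.
  - exists 0, 0, 0; repeat split; lra.
  - exists m; repeat split.
    + apply Hub; exists 0, 0; repeat split; lra.
    + intros x y Hx Hxy Hy; apply Hub; exists x, y; repeat split; lra.
    + intros m' Hm'; apply Hlub; intros d (x & y & Hx & Hxy & Hy & ->); auto.
Qed.

Lemma nonincreasing01_of_rise_contraction (f : R -> R) (beta : R) :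
  beta < 1 -> bounded01 f ->
  (forall m, 0 <= m -> rise_bounded01 f m -> rise_bounded01 f (beta * m)) ->
  nonincreasing01 f.
Proof.
  intros Hbeta Hf Hcontr.
  destruct (rise_bounded01_least f Hf) as (m & Hm0 & Hm & Hleast).
  assert (Hmm : m <= beta * m) by (apply Hleast, Hcontr; assumption).
  assert (m = 0) by nra; subst m.
  exact (proj2 (nonincreasing01_iff_rise0 f) Hm).
Qed.

Lemma Rmax_rise (a b c d t : R) :
  a - c <= t -> b - d <= t -> Rmax a b - Rmax c d <= t.
Proof. unfold Rmax; destruct (Rle_dec a b), (Rle_dec c d); lra. Qed.

(* Couple the observations at y and at x: ACK at both (prob. ry), ACK only
   at x (prob. rx - ry), NACK at both (prob. 1 - rx).  Each comparison is
   required only when its weight is positive: a zero weight is where the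
   corresponding posterior divides by zero. *)
Lemma mixture_rise (m ry rx u1 u0 v1 v0 : R) :
  0 <= ry -> ry <= rx -> rx <= 1 ->
  (0 < ry -> v1 - u1 <= m) ->
  (0 < rx - ry -> v0 - u1 <= m) ->
  (0 < 1 - rx -> v0 - u0 <= m) ->
  ry * v1 + (1 - ry) * v0 - (rx * u1 + (1 - rx) * u0) <= m.
Proof.
  intros Hry Hryx Hrx Hack Hmixed Hnack.
  assert (weighted : forall w d, 0 <= w -> (0 < w -> d <= m) -> w * d <= w * m).
  { intros w d Hw Hd; destruct (Rle_lt_or_eq_dec 0 w Hw) as [Hpos | <-].
    - apply Rmult_le_compat_l; auto; lra.
    - lra. }
  pose proof (weighted ry _ Hry Hack).
  pose proof (weighted (rx - ry) _ ltac:(lra) Hmixed).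
  pose proof (weighted (1 - rx) _ ltac:(lra) Hnack).
  nra.
Qed.

(* Bayes: the probability of state 0 under prior [pi] after an observation of
   likelihood [a] in state 0 and [b] in state 1. *)
Definition posterior (a b pi : R) : R := pi * a / (b * (1 - pi) + a * pi).

Lemma posterior_in01 (a b pi : R) :
  0 <= a -> 0 <= b -> 0 <= pi <= 1 -> 0 < b * (1 - pi) + a * pi ->
  0 <= posterior a b pi <= 1.
Proof.
  intros Ha Hb Hpi HD; unfold posterior; split.
  - apply Rmult_le_pos; [nra | left; apply Rinv_0_lt_compat; exact HD].
  - apply (Rmult_le_reg_r (b * (1 - pi) + a * pi)); auto.
    replace (pi * a / (b * (1 - pi) + a * pi) * (b * (1 - pi) + a * pi))
      with (pi * a) by (field; lra).
    nra.
Qed.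

Lemma posterior_le (a b a' b' x y : R) :
  0 <= a -> 0 <= b -> 0 <= a' -> 0 <= b' -> a * b' <= a' * b ->
  0 <= x -> x <= y -> y <= 1 ->
  0 < b * (1 - x) + a * x -> 0 < b' * (1 - y) + a' * y ->
  posterior a b x <= posterior a' b' y.
Proof.
  intros Ha Hb Ha' Hb' Hratio Hx Hxy Hy HDx HDy; unfold posterior.
  set (Dx := b * (1 - x) + a * x) in *; set (Dy := b' * (1 - y) + a' * y) in *.
  apply (Rmult_le_reg_r (Dx * Dy)); [nra |].
  replace (x * a / Dx * (Dx * Dy)) with (x * a * Dy) by (field; lra).
  replace (y * a' / Dy * (Dx * Dy)) with (y * a' * Dx) by (field; lra).
  unfold Dx, Dy.
  assert (x * (1 - y) <= y * (1 - x)) by nra.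
  assert (0 <= x * (1 - y)) by nra.
  assert (0 <= a * b') by nra.
  assert (x * (1 - y) * (a * b') <= y * (1 - x) * (a' * b)) by nra.
  nra.
Qed.

Section Belief.

Variables p00 p10 rho0 rho1 : R.
Hypotheses (Hp10 : 0 <= p10) (Hcorr : p10 <= p00) (Hp00 : p00 <= 1).
Hypotheses (Hrho0 : 0 <= rho0) (Hrho : rho0 <= rho1) (Hrho1 : rho1 <= 1).

Definition predict (w : R) : R := w * p00 + (1 - w) * p10.

Lemma predict_mono (w w' : R) :
  0 <= w -> w <= w' -> w' <= 1 ->
  0 <= predict w /\ predict w <= predict w' /\ predict w' <= 1.
Proof. intros; unfold predict; repeat split; nra. Qed.

Lemma iter_predict_mono (n : nat) (x y : R) :
  0 <= x -> x <= y -> y <= 1 ->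
  0 <= Nat.iter n predict x /\ Nat.iter n predict x <= Nat.iter n predict y
  /\ Nat.iter n predict y <= 1.
Proof.
  induction n as [| n IH]; intros Hx Hxy Hy; [simpl; lra |].
  destruct (IH Hx Hxy Hy) as (H0 & Hle & H1); simpl.
  apply predict_mono; assumption.
Qed.

Lemma gamma2_iter_predict (K : nat) (pi : R) :
  (1 <= K)%nat -> gamma2 K p00 p10 pi = Nat.iter K predict pi.
Proof.
  intros HK; destruct K as [| k]; [lia | clear HK].
  unfold gamma2; rewrite Nat.sub_1_r; simpl Nat.pred.
  revert pi; induction k as [| k IH]; intros pi.
  - simpl; unfold predict; ring.
  - rewrite Nat.iter_succ_r, <- IH, tech5; unfold predict; simpl; ring.
Qed.

Lemma gamma1_predict_posterior (pi : R) :
  rhoB rho0 rho1 pi <> 0 ->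
  gamma1 p00 p10 rho0 rho1 pi = predict (posterior rho0 rho1 pi).
Proof. unfold rhoB, gamma1, predict, posterior; intros; field; lra. Qed.

Lemma gamma0_predict_posterior (pi : R) :
  1 - rhoB rho0 rho1 pi <> 0 ->
  gamma0 p00 p10 rho0 rho1 pi = predict (posterior (1 - rho0) (1 - rho1) pi).
Proof. unfold rhoB, gamma0, predict, posterior; intros; field; lra. Qed.

Lemma predict_posterior_mono (a b a' b' x y : R) :
  0 <= a -> 0 <= b -> 0 <= a' -> 0 <= b' -> a * b' <= a' * b ->
  0 <= x -> x <= y -> y <= 1 ->
  0 < b * (1 - x) + a * x -> 0 < b' * (1 - y) + a' * y ->
  0 <= predict (posterior a b x)
  /\ predict (posterior a b x) <= predict (posterior a' b' y)
  /\ predict (posterior a' b' y) <= 1.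
Proof.
  intros.
  pose proof (posterior_in01 a b x ltac:(lra) ltac:(lra) ltac:(lra) ltac:(lra)).
  pose proof (posterior_in01 a' b' y ltac:(lra) ltac:(lra) ltac:(lra) ltac:(lra)).
  apply predict_mono; [lra | apply posterior_le | lra]; assumption.
Qed.

Definition continuation (V : R -> R) (pi : R) : R :=
  rhoB rho0 rho1 pi * V (gamma1 p00 p10 rho0 rho1 pi)
  + (1 - rhoB rho0 rho1 pi) * V (gamma0 p00 p10 rho0 rho1 pi).

Lemma continuation_rise (V : R -> R) (m : R) :
  rise_bounded01 V m -> rise_bounded01 (continuation V) m.
Proof.
  intros HV x y Hx Hxy Hy; unfold continuation.
  assert (HV' : forall u v, 0 <= u /\ u <= v /\ v <= 1 -> V v - V u <= m)
    by (intros u v (? & ? & ?); auto).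
  assert (Erho : forall pi, rhoB rho0 rho1 pi = rho1 * (1 - pi) + rho0 * pi)
    by (intros; unfold rhoB; ring).
  assert (Enack : forall pi,
             1 - rhoB rho0 rho1 pi = (1 - rho1) * (1 - pi) + (1 - rho0) * pi)
    by (intros; unfold rhoB; ring).
  assert (Hrhoy : 0 <= rhoB rho0 rho1 y) by (rewrite Erho; nra).
  assert (Hrhoxy : rhoB rho0 rho1 y <= rhoB rho0 rho1 x) by (rewrite !Erho; nra).
  assert (Hrhox : rhoB rho0 rho1 x <= 1) by (rewrite Erho; nra).
  apply mixture_rise; auto; intros Hw.
  - rewrite !gamma1_predict_posterior by lra.
    apply HV', predict_posterior_mono; try lra; rewrite <- Erho; lra.
  - rewrite gamma1_predict_posterior, gamma0_predict_posterior by lra.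
    apply HV', predict_posterior_mono; try nra.
    + rewrite <- Erho; lra.
    + rewrite <- Enack; lra.
  - rewrite !gamma0_predict_posterior by lra.
    apply HV', predict_posterior_mono; try nra; rewrite <- Enack; lra.
Qed.

End Belief.

Lemma RS_antitone (R0 R1 x y : R) : R0 <= R1 -> x <= y -> RS R0 R1 y <= RS R0 R1 x.
Proof. unfold RS; intros; nra. Qed.

Section Bellman.

Variables (K : nat) (p00 p10 rho0 rho1 R0 R1 eta beta : R) (VS VNS V : R -> R).
Hypotheses (HK : (1 <= K)%nat) (Hp10 : 0 <= p10) (Hcorr : p10 <= p00) (Hp00 : p00 <= 1).
Hypotheses (Hrho0 : 0 <= rho0) (Hrho : rho0 <= rho1) (Hrho1 : rho1 <= 1).
Hypotheses (HR : R0 <= R1) (Hbeta : 0 <= beta).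
Hypothesis Hsol : bellman_solution K p00 p10 rho0 rho1 R0 R1 eta beta VS VNS V.

Lemma VS_rise (m : R) : rise_bounded01 V m -> rise_bounded01 VS (beta * m).
Proof.
  intros HV x y Hx Hxy Hy; destruct Hsol as (_ & _ & _ & Heq).
  destruct (Heq x ltac:(lra)) as (-> & _); destruct (Heq y ltac:(lra)) as (-> & _).
  pose proof (RS_antitone R0 R1 x y HR Hxy).
  pose proof (continuation_rise p00 p10 rho0 rho1 Hp10 Hcorr Hp00 Hrho0 Hrho Hrho1
                V m HV x y Hx Hxy Hy) as Hcont.
  unfold continuation in Hcont; nra.
Qed.

Lemma VNS_rise (m : R) : rise_bounded01 V m -> rise_bounded01 VNS (beta * m).
Proof.
  intros HV x y Hx Hxy Hy; destruct Hsol as (_ & _ & _ & Heq).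
  destruct (Heq x ltac:(lra)) as (_ & -> & _); destruct (Heq y ltac:(lra)) as (_ & -> & _).
  rewrite !gamma2_iter_predict by assumption.
  destruct (iter_predict_mono p00 p10 Hp10 Hcorr Hp00 K x y Hx Hxy Hy) as (H0 & Hle & H1).
  pose proof (HV _ _ H0 Hle H1); nra.
Qed.

Lemma V_rise (m : R) : rise_bounded01 V m -> rise_bounded01 V (beta * m).
Proof.
  intros HV x y Hx Hxy Hy; destruct Hsol as (_ & _ & _ & Heq).
  destruct (Heq x ltac:(lra)) as (_ & _ & ->); destruct (Heq y ltac:(lra)) as (_ & _ & ->).
  apply Rmax_rise; [apply VS_rise | apply VNS_rise]; assumption.
Qed.

Theorem bellman_nonincreasing01 :
  beta < 1 -> nonincreasing01 V /\ nonincreasing01 VS /\ nonincreasing01 VNS.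
Proof.
  intros Hbeta1.
  assert (HV : nonincreasing01 V).
  { destruct Hsol as (_ & _ & Hbounded & _).
    apply (nonincreasing01_of_rise_contraction V beta Hbeta1 Hbounded).
    intros m _; apply V_rise. }
  apply nonincreasing01_iff_rise0 in HV.
  rewrite !nonincreasing01_iff_rise0, <- (Rmult_0_r beta).
  split; [| split]; [apply V_rise | apply VS_rise | apply VNS_rise]; exact HV.
Qed.

End Bellman.

Theorem lemma3 (K : nat) (p00 p10 rho0 rho1 R0 R1 eta beta : R)
  (VS VNS V : R -> R) :
  (1 <= K)%nat ->
  0 <= p00 <= 1 -> 0 <= p10 <= 1 ->
  0 <= rho0 <= 1 -> 0 <= rho1 <= 1 ->
  rho0 < rho1 -> R0 < R1 ->
  p00 > p10 ->
  0 < beta < 1 ->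
  bellman_solution K p00 p10 rho0 rho1 R0 R1 eta beta VS VNS V ->
  nonincreasing01 V /\ nonincreasing01 VS /\ nonincreasing01 VNS.
Proof.
  intros HK Hp00 Hp10 Hrho0 Hrho1 Hrho HR Hcorr Hbeta Hsol.
  apply (bellman_nonincreasing01 K p00 p10 rho0 rho1 R0 R1 eta beta VS VNS V);
    auto; lra.
Qed.
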